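(* Let $G$ be a finite group and $\mathcal{P}$ a prime ideal of $\mathrm{Gh}(\underline{A}_G)$ with $\mathcal{P}(G/e)=(p)\subseteq\mathbb{Z}$, where $p$ is a prime or $0$. For $I\le G$ let $p_I\ge0$ be the integer with $\mathcal{P}(G/G)=\widetilde{A}(G)\cap\prod_{I\le G}p_I\mathbb{Z}$. Then $\mathscr{F}(\mathcal{P})=\{I\le G: p_I\ne1\}$ is a nonempty family of subgroups of $G$.
   Context: A family of subgroups of $G$ is a nonempty set of subgroups closed under conjugation and passing to subgroups. For $H\le G$, $\widetilde{A}(H)$ is the subring of $\prod_{I\le H}\mathbb{Z}$ of tuples $(a_I)_{I\le H}$ with $a_{hIh^{-1}}=a_I$ for $h\in H$ (so $\widetilde{A}(e)=\mathbb{Z}$). $\mathrm{Gh}(\underline{A}_G)$ is the $G$-Tambara functor with $\mathrm{Gh}(\underline{A}_G)(G/H)=\widetilde{A}(H)$ and, for $H\le K$, $g\in G$, $I^g=g^{-1}Ig$: $\mathrm{res}^K_H(b)_L=b_L$; $\mathrm{tr}^K_H(a)_I=\sum_{kH\in K/H,\ I^k\le H}a_{I^k}$; $\mathrm{nm}^K_H(a)_I=\prod_{IgH\in I\backslash K/H}a_{I^g\cap H}$; $c_{g,H}(a)_J=a_{J^g}$ for $J\le gHg^{-1}$. A Tambara ideal is a collection of ideals $\mathcal{I}(G/H)$ closed under all restrictions, transfers, norms and conjugations; it is prime (Nakaoka) if it is not everything and whenever $a\in T(G/K_1)$, $b\in T(G/K_2)$ satisfy $\big(\mathrm{nm}^L_{g_1H_1g_1^{-1}}c_{g_1,H_1}\mathrm{res}^{K_1}_{H_1}(a)\big)\big(\mathrm{nm}^L_{g_2H_2g_2^{-1}}c_{g_2,H_2}\mathrm{res}^{K_2}_{H_2}(b)\big)\in\mathcal{I}(G/L)$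 for all $L,H_1,H_2\le G$, $g_1,g_2\in G$ with $H_i\le K_i$, $g_iH_ig_i^{-1}\le L$, then $a\in\mathcal{I}(G/K_1)$ or $b\in\mathcal{I}(G/K_2)$. *)

From mathcomp Require Import all_boot all_order all_algebra all_fingroup.
Set Implicit Arguments. Unset Strict Implicit. Unset Printing Implicit Defensive.
Import GRing.Theory.
Local Open Scope ring_scope.

(* For H <= G, Gh(G/H) = Atilde(H) is modelled as the set of finite functions
   a : {set gT} -> int which vanish off the subgroups of H and satisfy
   a (I :^ h) = a I for I <= H, h in H.  Here I :^ g = g^-1 I g = I^g. *)

Section Ghost.
Variable gT : finGroupType.
Notation elt := {ffun {set gT} -> int}.

Definition subgrp (H I : {set gT}) : bool := group_set I && (I \subset H).

Definition Atilde (H : {set gT}) (a : elt) : Prop :=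
  (forall I, ~~ subgrp H I -> a I = 0) /\
  (forall I h, subgrp H I -> h \in H -> a (I :^ h)%g = a I).

Definition zeroF : elt := [ffun _ => 0].
Definition addF (a b : elt) : elt := [ffun I => a I + b I].
Definition oppF (a : elt) : elt := [ffun I => - a I].
Definition mulF (a b : elt) : elt := [ffun I => a I * b I].

Definition resG (H : {set gT}) (b : elt) : elt :=
  [ffun L => if subgrp H L then b L else 0].

Definition trG (K H : {set gT}) (a : elt) : elt :=
  [ffun I => if subgrp K I then
     \sum_(C in lcosets H K)
        (if (I :^ repr C)%g \subset H then a (I :^ repr C)%g else 0)
   else 0].

(* nm^K_H (a)_I = prod_{IgH in I\K/H} a_{I^g cap H}  for I <= K *)
Definition nmG (K H : {set gT}) (a : elt) : elt :=
  [ffun I => if subgrp K I then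
     \prod_(D in [set (I * (g *: H))%g | g in K])
        a ((I :^ repr D) :&: H)%g
   else 0].

Definition conjG (g : gT) (H : {set gT}) (a : elt) : elt :=
  [ffun J => if subgrp (H :^ g^-1)%g J then a (J :^ g)%g else 0].

Definition is_ideal (H : {set gT}) (J : elt -> Prop) : Prop :=
  [/\ (forall a, J a -> Atilde H a),
      J zeroF,
      (forall a b, J a -> J b -> J (addF a b)),
      (forall a, J a -> J (oppF a)) &
      (forall a b, Atilde H b -> J a -> J (mulF b a))].

(* Tambara ideal of Gh(A_G): P H is the ideal P(G/H), for H <= G *)
Definition tambara_ideal (G : {set gT}) (P : {set gT} -> elt -> Prop) : Prop :=
  [/\ (forall H, subgrp G H -> is_ideal H (P H)),
      (forall K H a, subgrp G K -> subgrp K H -> P K a -> P H (resG H a)),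
      (forall K H a, subgrp G K -> subgrp K H -> P H a -> P K (trG K H a)),
      (forall K H a, subgrp G K -> subgrp K H -> P H a -> P K (nmG K H a)) &
      (forall H g a, subgrp G H -> g \in G -> P H a ->
          P (H :^ g^-1)%g (conjG g H a))].

(* Nakaoka prime Tambara ideal *)
Definition prime_tambara_ideal (G : {set gT}) (P : {set gT} -> elt -> Prop) : Prop :=
  [/\ tambara_ideal G P,
      (exists H a, [/\ subgrp G H, Atilde H a & ~ P H a]) &
      (forall K1 K2 a b, subgrp G K1 -> subgrp G K2 -> Atilde K1 a -> Atilde K2 b ->
         (forall L H1 H2 g1 g2, subgrp G L -> subgrp K1 H1 -> subgrp K2 H2 ->
            g1 \in G -> g2 \in G ->
            (H1 :^ g1^-1)%g \subset L -> (H2 :^ g2^-1)%g \subset L ->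
            P L (mulF (nmG L (H1 :^ g1^-1)%g (conjG g1 H1 (resG H1 a)))
                      (nmG L (H2 :^ g2^-1)%g (conjG g2 H2 (resG H2 b))))) ->
         P K1 a \/ P K2 b)].

Definition subgroup_family (G : {set gT}) (F : {set {set gT}}) : Prop :=
  [/\ F != set0,
      (forall I, I \in F -> subgrp G I),
      (forall I g, I \in F -> g \in G -> (I :^ g)%g \in F) &
      (forall I J, I \in F -> group_set J -> J \subset I -> J \in F)].

End Ghost.

From mathcomp Require Import all_boot all_order all_algebra all_fingroup.
Set Implicit Arguments. Unset Strict Implicit. Unset Printing Implicit Defensive.
Import GRing.Theory.
Local Open Scope ring_scope.

(* Complement of the family: p_I = 1 exactly when some a in P(G/G) has a_I = 1.
   This set is closed under conjugation because elements of Atilde(G) are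
   conjugation invariant, and closed under passing to overgroups: if J <= I and
   a_J = 1, then tr^G_{N_G(I)} (delta_I * nm^{N_G(I)}_J res^G_J a) lies in P(G/G)
   and takes the value 1 at I.  Finally the trivial group belongs to the family,
   since otherwise res^G_e a would be an element of P(G/e) = (p) equal to 1. *)

Section GhostValues.

Variable gT : finGroupType.
Implicit Types (G I J N : {group gT}) (b e : {ffun {set gT} -> int}).

Definition indicatorF (I : {set gT}) : {ffun {set gT} -> int} :=
  [ffun K => if K == I then 1 else 0].

Lemma subgrp_group (H : {set gT}) G : subgrp H G = (G \subset H).
Proof. by rewrite /subgrp groupP. Qed.

Lemma subgrp_trans (G I J : {set gT}) : subgrp G I -> subgrp I J -> subgrp G J.
Proof. by case/andP=> _ sIG /andP[gJ sJI]; rewrite /subgrp gJ (subset_trans sJI). Qed.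

Lemma subgrp_conj G (I : {set gT}) g :
  subgrp G I -> g \in G -> subgrp G (I :^ g)%g.
Proof.
case/andP=> gI sIG gG.
by rewrite /subgrp (groupP (Group gI :^ g)%G) -(conjGid gG) conjSg.
Qed.

(* Every element r of a double coset I g J with g in N normalises I,
   so each factor is b (I^r :&: J) = b J. *)
Lemma nmG_eq1 N I J b :
  I \subset N -> N \subset 'N(I)%g -> J \subset I -> b J = 1 -> nmG N J b I = 1.
Proof.
move=> sIN nIN sJI bJ; rewrite ffunE subgrp_group sIN.
apply: big1 => _ /imsetP[g gN ->].
have gIgJ : g \in (I * (g *: J))%g.
  by rewrite -[g]mul1g mem_mulg ?group1 // mul1g lcoset_refl.
case/mulsgP: (mem_repr _ gIgJ) => i _ iI /lcosetP[j jJ ->] ->.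
have nIr : (i * (g * j))%g \in 'N(I)%g.
  by apply: (subsetP nIN); rewrite !groupM // (subsetP sIN) // (subsetP sJI).
by rewrite (normP nIr) (setIidPr sJI).
Qed.

(* Only the trivial coset contributes: I^r = I forces r in N_G(I). *)
Lemma trG_normaliser G I e :
  I \subset G -> (forall K, K != I :> {set gT} -> e K = 0) ->
  trG G 'N_G(I)%g e I = e I.
Proof.
move=> sIG eI0; rewrite ffunE subgrp_group sIG.
have sINGI : I \subset 'N_G(I)%g by rewrite subsetI sIG normG.
rewrite (bigD1 ('N_G(I)%g : {set gT})) /=; last first.
  by apply/lcosetsP; exists 1%g; rewrite ?group1 ?lcoset1.
rewrite repr_group conjsg1 sINGI big1 ?addr0 // => _ /andP[/lcosetsP[x xG ->]].
have rx := mem_repr x (lcoset_refl 'N_G(I)%g x).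
case: ifP => // _ neq_xN; apply: eI0; apply: contraNneq neq_xN => /normP nIr.
have rG : repr (x *: 'N_G(I))%g \in G.
  by case/lcosetP: rx => n /setIP[nG _] ->; rewrite groupM.
have rN : repr (x *: 'N_G(I))%g \in 'N_G(I)%g by rewrite inE rG.
by rewrite -(lcoset_eqP rx) lcoset_id.
Qed.

Lemma Atilde_indicatorF G I : I \subset G -> Atilde 'N_G(I)%g (indicatorF I).
Proof.
move=> sIG; split=> [K|K h _ /setIP[_ nIh]]; rewrite !ffunE.
  by case: eqP => // -> /negP[]; rewrite subgrp_group subsetI sIG normG.
case: (K =P I) => [->|neKI]; first by rewrite (normP nIh) eqxx.
case: eqP => // KhI; case: neKI.
by rewrite -(conjsgK h K) KhI; apply/normP; rewrite groupV.
Qed.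

End GhostValues.

Section TambaraIdealValues.

Variables (gT : finGroupType) (G : {group gT}).
Variable P : {set gT} -> {ffun {set gT} -> int} -> Prop.
Hypothesis PT : tambara_ideal G P.

Definition takes_value1 (I : {set gT}) : Prop := exists2 a, P G a & a I = 1.

Lemma tambara_ideal_Atilde H a : subgrp G H -> P H a -> Atilde H a.
Proof. by case: PT => idealP _ _ _ _ /idealP[inA _ _ _ _]; apply: inA. Qed.

Lemma takes_value1_conj I g :
  subgrp G I -> g \in G -> takes_value1 (I :^ g)%g -> takes_value1 I.
Proof.
move=> sIG gG [a PGa aIg]; exists a => //.
have sGG : subgrp G G by rewrite subgrp_group.
by rewrite -((tambara_ideal_Atilde sGG PGa).2 I g sIG gG).
Qed.

Lemma takes_value1_sup I J :
  subgrp G I -> subgrp I J -> takes_value1 J -> takes_value1 I.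
Proof.
case/andP=> gI sIG /andP[gJ sJI] [a PGa aJ].
pose IG := Group gI; pose JG := Group gJ; rewrite -[I]/(IG : {set gT}).
case: PT => idealP resP trP nmP _.
have sGG : subgrp G G by rewrite subgrp_group.
have sNG : subgrp G 'N_G(IG)%g by rewrite subgrp_group subsetIl.
have sIN : IG \subset 'N_G(IG)%g by rewrite subsetI sIG normG.
have sJN : subgrp 'N_G(IG)%g JG by rewrite subgrp_group (subset_trans sJI).
have sJG : subgrp G JG by rewrite subgrp_group (subset_trans sJI).
set c := nmG 'N_G(IG)%g JG (resG JG a).
have PNc : P 'N_G(IG)%g c := nmP _ _ _ sNG sJN (resP _ _ _ sGG sJG PGa).
have PNdc : P 'N_G(IG)%g (mulF (indicatorF IG) c).
  by case: (idealP _ sNG) => _ _ _ _ mulP; apply: mulP (@Atilde_indicatorF _ G IG sIG) PNc.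
exists (trG G 'N_G(IG)%g (mulF (indicatorF IG) c)); first exact: trP.
rewrite trG_normaliser => [|//|K neKI]; last by rewrite !ffunE (negbTE neKI) mul0r.
rewrite ffunE [indicatorF _ _]ffunE eqxx mul1r nmG_eq1 ?subsetIr //.
by rewrite ffunE subgrp_group subxx.
Qed.

End TambaraIdealValues.

Theorem lemma4p9 (gT : finGroupType) (G : {group gT})
    (P : {set gT} -> {ffun {set gT} -> int} -> Prop) (p : nat)
    (pI : {set gT} -> nat) :
  prime_tambara_ideal G P ->
  (prime p \/ p = 0%N) ->
  (forall a, Atilde (1%g : {set gT}) a -> (P (1%g : {set gT}) a <-> (p %| a (1%g : {set gT}))%Z)) ->
  (forall I, subgrp G I -> forall n : int,
      (exists a, P G a /\ a I = n) <-> (pI I %| n)%Z) ->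
  (forall a, Atilde G a ->
      (P G a <-> (forall I, subgrp G I -> (pI I %| a I)%Z))) ->
  subgroup_family G [set I : {set gT} | subgrp G I & pI I != 1%N].
Proof.
(* Neither the primality of P nor the description of P(G/G) by the p_I is needed. *)
move=> [PT _ _] p_prime P1E pIE _.
have pI_eq1 I : subgrp G I -> (pI I == 1%N) <-> takes_value1 G P I.
  move=> sIG; rewrite -dvdn1 -[(_ %| 1)%N]/(pI I %| 1)%Z.
  split=> [/(pIE I sIG 1)[a []]|[a PGa aI]]; first by exists a.
  by apply/(pIE I sIG 1); exists a.
split.
- have s1G : subgrp G 1%g by rewrite subgrp_group sub1G.
  apply/set0Pn; exists 1%g; rewrite inE s1G; apply/negP => /(pI_eq1 _ s1G)[a PGa a1].
  have sGG : subgrp G G by rewrite subgrp_group.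
  case: (PT) => _ resP _ _ _; have P1a := resP _ _ _ sGG s1G PGa.
  have := (P1E _ (tambara_ideal_Atilde PT s1G P1a)).1 P1a.
  rewrite ffunE subgrp_group subxx a1 dvdzE /= dvdn1 => /eqP p1.
  by case: p_prime => [|]; rewrite p1.
- by move=> I; rewrite inE => /andP[].
- move=> I g; rewrite !inE => /andP[sIG pIn1] gG; have sIgG := subgrp_conj sIG gG.
  rewrite sIgG; apply: contra pIn1 => /(pI_eq1 _ sIgG) v1.
  exact/(pI_eq1 _ sIG)/(takes_value1_conj PT sIG gG).
- move=> I J; rewrite !inE => /andP[sIG pIn1] gJ sJI; have sIJ : subgrp I J by apply/andP.
  have sJG := subgrp_trans sIG sIJ.
  rewrite sJG; apply: contra pIn1 => /(pI_eq1 _ sJG) v1.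
  exact/(pI_eq1 _ sIG)/(takes_value1_sup PT sIG sIJ).
Qed.
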